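(* Let $m$ and $n$ be two even positive integers with $m\leq n$, and let $p$ be a positive integer. A magic column rectangle $MCR(m^{(1)},n^{(1)};p)$ exists if and only if both of the following hold: (i) $m+n\equiv 0 \pmod 4$; and (ii) $1=2(2pn+1)^2-(2pm+2pn+1)^2$ or $m\geq (\sqrt{2}-1)n+\frac{\sqrt{2}-1}{2p}$.
   Context: A magic column rectangle $MCR(m^{(1)},n^{(1)};p)$ (with $m\le n$) is an $(m+n)\times p$ matrix whose entries are $1,2,\ldots,(m+n)p$, each appearing exactly once, which is partitioned into two blocks, the first consisting of $m$ rows (an $m\times p$ submatrix) and the second of the remaining $n$ rows (an $n\times p$ submatrix), such that the sum of the entries in every column of each block is the same constant (necessarily $\frac{(m+n)(mp+np+1)}{4}$). *)

From mathcomp Require Import all_boot all_algebra.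
From Stdlib Require Reals.
Set Implicit Arguments. Unset Strict Implicit. Unset Printing Implicit Defensive.

Definition is_MCR (m n p : nat) (A : 'M[nat]_(m + n, p)) : Prop :=
  (forall i j, 1 <= A i j <= (m + n) * p)%N /\
  (forall i1 j1 i2 j2, A i1 j1 = A i2 j2 -> i1 = i2 /\ j1 = j2) /\
  exists c : nat, forall j : 'I_p,
    (\sum_(i < m) A (lshift n i) j)%N = c /\
    (\sum_(i < n) A (rshift m i) j)%N = c.

Definition MCR_exists (m n p : nat) : Prop :=
  exists A : 'M[nat]_(m + n, p), is_MCR A.

Definition pell_cond (m n p : nat) : Prop :=
  ((1 : int) = 2 * Posz ((2 * p * n + 1) ^ 2)%N - Posz ((2 * p * m + 2 * p * n + 1) ^ 2)%N)%R.

Definition sqrt_cond (m n p : nat) : Prop :=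
  let s2m1 := Rdefinitions.Rminus (R_sqrt.sqrt (Raxioms.INR 2)) (Raxioms.INR 1) in
  Rdefinitions.Rle
    (Rdefinitions.Rplus (Rdefinitions.Rmult s2m1 (Raxioms.INR n))
       (Rdefinitions.Rdiv s2m1 (Rdefinitions.Rmult (Raxioms.INR 2) (Raxioms.INR p))))
    (Raxioms.INR m).

(* Necessity: the entries are 1, ..., (m+n)p, so the magic constant c satisfies
   4c = (m+n)((m+n)p+1); since (m+n)p+1 is odd, 4 divides m+n.  The bottom block
   holds np distinct positive integers, so pc >= np(np+1)/2; multiplied by 4p this
   is 2(2pn+1)^2 <= (2pm+2pn+1)^2 + 1, i.e. condition (ii).
   Sufficiency: write m = 2b, n = 2b+4a, so that (ii) reads 4pa^2 + a <= 2pb^2, and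
   let h = (m+n)/2, S = 2hp+1.  If some arrangement K of 1, ..., hp in an h x p
   array has constant column sums qS on its first w rows, then using each row of K
   once directly and once complemented (x |-> S - x) yields an MCR, provided
   m = w+2f, n = w+2g and w+f = 2q+g.  Filling the first w = 2t rows with
   consecutive values in boustrophedon order, shifted and with one skipped value,
   realises every column sum in an interval; the largest t <= b with
   2pt^2 <= a(4p(a+b)+1) puts qS, q = t-a, in that interval. *)

From Stdlib Require Import Reals Lra.
From mathcomp Require Import all_boot all_algebra zify.

Set Implicit Arguments.
Unset Strict Implicit.
Unset Printing Implicit Defensive.

Lemma uniq_sumn_ge B (s : seq nat) : uniq s -> {in s, forall x, 0 < x <= B} ->
  size s * (size s).+1 <= 2 * sumn s.
Proof.
elim: B s => [|B IH] s s_uniq s_range.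
  by case: s s_range {s_uniq} => // x s /(_ x (mem_head _ _)); lia.
have [sB | sNB] := boolP (B.+1 \in s); last first.
  apply: IH => // x xs; have := s_range x xs.
  have /eqP : x != B.+1 by apply: contraNneq sNB => <-.
  lia.
have size_s : size s <= B.+1.
  rewrite -(size_iota 1 B.+1); apply: uniq_leq_size => // x xs.
  by rewrite mem_iota; have := s_range x xs; lia.
have rem_range : {in rem B.+1 s, forall x, 0 < x <= B}.
  move=> x; rewrite (mem_rem_uniq _ s_uniq) inE => /andP[/eqP xB xs].
  by have := s_range x xs; lia.
have := IH _ (rem_uniq _ s_uniq) rem_range.
rewrite (perm_sumn (perm_to_rem sB)) size_rem //=.
by move: size_s; case: (size s) => //= k; nia.
Qed.

Lemma injective_sum_ge (T : finType) (F : T -> nat) B :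
  injective F -> (forall x, 0 < F x <= B) -> #|T| * #|T|.+1 <= 2 * \sum_x F x.
Proof.
move=> F_inj F_range.
have := @uniq_sumn_ge B [seq F x | x <- enum T].
rewrite map_inj_uniq // enum_uniq size_map -cardE sumnE big_map big_enum; apply=> //.
by move=> _ /mapP[x _ ->].
Qed.

(* Applying the bound to [F] and to its reflection [N.+1 - F] squeezes the sum. *)
Lemma injective_sum_eq (T : finType) (F : T -> nat) N : #|T| = N ->
  injective F -> (forall x, 0 < F x <= N) -> 2 * \sum_x F x = N * N.+1.
Proof.
move=> card_T F_inj F_range.
have := injective_sum_ge F_inj F_range; rewrite card_T => le_F.
have reflect_inj : injective (fun x => N.+1 - F x).
  by move=> x y /= E; apply: F_inj; have := F_range x; have := F_range y; lia.
have le_reflect : N * N.+1 <= 2 * \sum_x (N.+1 - F x).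
  by have := injective_sum_ge (B := N) reflect_inj; rewrite card_T; apply=> x; have := F_range x; lia.
have : \sum_x (N.+1 - F x) + \sum_x F x = N * N.+1.
  rewrite -big_split /= (eq_bigr (fun=> N.+1)) ?sum_nat_const -card_T // => x _.
  by have := F_range x; lia.
lia.
Qed.

Lemma MCR_magic_constant m n p (A : 'M[nat]_(m + n, p)) : 0 < p -> is_MCR A ->
  exists c, 4 * c = (m + n) * ((m + n) * p + 1) /\ n * p * (n * p + 1) <= 2 * p * c.
Proof.
move=> p_gt0 [A_range [A_inj [c A_sum]]]; exists c.
have sum_cols k (F : 'I_k -> 'I_p -> nat) d : (forall j, \sum_i F i j = d) ->
    \sum_(x : 'I_k * 'I_p) F x.1 x.2 = p * d.
  move=> F_sum; rewrite -(pair_bigA _ F) exchange_big /=.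
  by rewrite (eq_bigr (fun=> d)) // sum_nat_const card_ord.
have card_cells k : #|{: 'I_k * 'I_p}| = k * p by rewrite card_prod !card_ord.
have all_inj : injective (fun x : 'I_(m + n) * 'I_p => A x.1 x.2).
  by move=> [i1 j1] [i2 j2] /= /A_inj[-> ->].
have bottom_inj : injective (fun x : 'I_n * 'I_p => A (rshift m x.1) x.2).
  by move=> [i1 j1] [i2 j2] /= /A_inj[/rshift_inj -> ->].
have := injective_sum_eq (card_cells _) all_inj (fun x => A_range x.1 x.2).
rewrite (sum_cols _ _ (2 * c)) => [total | j]; last first.
  by rewrite big_split_ord /= (proj1 (A_sum j)) (proj2 (A_sum j)) addnn -mul2n.
have := injective_sum_ge bottom_inj (fun x => A_range _ x.2).
rewrite card_cells (sum_cols _ (fun i j => A (rshift m i) j) c) => [bottom | j]; last first.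
  exact: (proj2 (A_sum j)).
split; last by lia.
by apply/eqP; rewrite -(eqn_pmul2l p_gt0); apply/eqP; lia.
Qed.

Lemma MCR_necessary m n p : 0 < p -> ~~ odd m -> ~~ odd n -> MCR_exists m n p ->
  4 %| m + n /\ 2 * n * (n * p + 1) <= (m + n) * ((m + n) * p + 1).
Proof.
move=> p_gt0 m_even n_even [A /(MCR_magic_constant p_gt0)[c [magic bottom]]].
split; last by rewrite -(leq_pmul2l p_gt0); lia.
have odd_factor : coprime 4 ((m + n) * p + 1).
  by rewrite -[4]/(2 ^ 2) coprime_pexpl // coprime2n addn1 /= oddM oddD (negbTE m_even) (negbTE n_even).
by rewrite -(Gauss_dvdl _ odd_factor) -magic dvdn_mulr.
Qed.

Definition snake (p r j : nat) : nat := r * p + (if odd r then p.-1 - j else j).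

Lemma snake_lt p h r j : r < h -> j < p -> snake p r j < h * p.
Proof. by rewrite /snake; case: ifP; nia. Qed.

Lemma snake_inj p r1 j1 r2 j2 : j1 < p -> j2 < p ->
  snake p r1 j1 = snake p r2 j2 -> r1 = r2 /\ j1 = j2.
Proof.
move=> j1_lt j2_lt; rewrite /snake.
have off_lt r j : j < p -> (if odd r then p.-1 - j else j) < p by case: ifP; lia.
have p_gt0 : 0 < p by lia.
move=> /(congr1 (fun z => (z %/ p, z %% p))) [].
rewrite !divnMDl ?modnMDl ?divn_small ?modn_small ?off_lt // !addn0 => <-.
by case: ifP => _ off_eq; split => //; lia.
Qed.

Lemma sum_snake p s j : j < p -> \sum_(r < s.*2) snake p r j + s = 2 * p * s ^ 2.
Proof.
move=> j_lt; elim: s => [|s IH]; first by rewrite big_ord0 muln0.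
rewrite doubleS !big_ord_recr /=; move: IH.
by rewrite /snake /= odd_double /= -addnn; nia.
Qed.

(* For y + L < H, a permutation of [0, H) mapping [0, L) increasingly onto
   [y, y + L] minus the gap y + x. *)
Definition block_shift (L y x z : nat) : nat :=
  if z < L then y + z + (x <= z)
  else if z - L < y then z - L
  else if z - L == y then y + x
  else z.

Lemma block_shift_lt L y x H z : x <= L -> y + L < H -> z < H -> block_shift L y x z < H.
Proof. by rewrite /block_shift; repeat case: ifP; lia. Qed.

Lemma block_shift_inj L y x H z1 z2 : x <= L -> y + L < H -> z1 < H -> z2 < H ->
  block_shift L y x z1 = block_shift L y x z2 -> z1 = z2.
Proof. by rewrite /block_shift; repeat case: ifP; lia. Qed.

Lemma sum_ord_geq u w : \sum_(r < w) (u <= r) = w - u.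
Proof. by elim: w => [|w IH]; rewrite ?big_ord0 // big_ord_recr /= IH; case: leqP; lia. Qed.

Definition half_array p w y u r j := (block_shift (w * p) y (u * p) (snake p r j)).+1.

Section HalfArray.

Variables (p w y u h : nat).
Hypotheses (u_le : u <= w) (y_lt : y + w * p < h * p).

Let gap_le : u * p <= w * p. Proof. exact: leq_mul. Qed.

Lemma half_array_range r j : r < h -> j < p -> 0 < half_array p w y u r j <= h * p.
Proof. by move=> r_lt j_lt; have := block_shift_lt gap_le y_lt (snake_lt r_lt j_lt). Qed.

Lemma half_array_inj r1 j1 r2 j2 : r1 < h -> r2 < h -> j1 < p -> j2 < p ->
  half_array p w y u r1 j1 = half_array p w y u r2 j2 -> r1 = r2 /\ j1 = j2.
Proof.
move=> r1_lt r2_lt j1_lt j2_lt [] /(block_shift_inj gap_le y_lt (snake_lt r1_lt j1_lt) (snake_lt r2_lt j2_lt)).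
exact: snake_inj.
Qed.

End HalfArray.

Lemma sum_half_array p t y u j : u <= t.*2 -> j < p ->
  \sum_(r < t.*2) half_array p t.*2 y u r j + u = t * (2 * p * t + 1) + t.*2 * y.+1.
Proof.
move=> u_le j_lt.
have -> : \sum_(r < t.*2) half_array p t.*2 y u r j =
          \sum_(r < t.*2) (snake p r j + (u <= r) + y.+1).
  apply: eq_bigr => r _; have r_lt := ltn_ord r.
  rewrite /half_array /block_shift snake_lt // addnC.
  have -> : (u * p <= snake p r j) = (u <= r) by rewrite /snake; case: ifP; case: leqP; nia.
  lia.
rewrite 2!big_split /= sum_ord_geq sum_nat_const card_ord.
by have := sum_snake t j_lt; move: (\sum_(r < t.*2) snake p r j) => S; nia.
Qed.

Definition top_balanced h p w sigma (K : nat -> nat -> nat) :=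
  [/\ forall r j, r < h -> j < p -> 0 < K r j <= h * p,
      forall r1 j1 r2 j2, r1 < h -> r2 < h -> j1 < p -> j2 < p ->
        K r1 j1 = K r2 j2 -> r1 = r2 /\ j1 = j2
    & forall j, j < p -> \sum_(r < w) K r j = sigma].

Lemma ceil_multiple V w D : 0 < D -> V <= w * D -> exists2 y, y < D & V <= w * y.+1 <= V + w.
Proof.
move=> D_gt0 V_le; have [w0 | w_gt0] := posnP w; first by exists 0; move: V_le; rewrite w0; lia.
exists (V.-1 %/ w).
  by rewrite ltn_divLR // mulnC; have := muln_gt0 w D; rewrite w_gt0 D_gt0; lia.
have := ltn_ceil V.-1 w_gt0; have := leq_divM V.-1 w; nia.
Qed.

Lemma top_balanced_exists p t d sigma : 0 < p -> 0 < d ->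
  t * (2 * p * t + 1) <= sigma <= t * (2 * p * t + 1) + t.*2 * (p * d) ->
  exists K, top_balanced (t.*2 + d) p t.*2 sigma K.
Proof.
move=> p_gt0 d_gt0 /andP[sigma_ge sigma_le].
have pd_gt0 : 0 < p * d by rewrite muln_gt0 p_gt0.
have V_le : sigma - t * (2 * p * t + 1) <= t.*2 * (p * d) by lia.
have [y y_lt /andP[V_le_y V_ge_y]] := ceil_multiple pd_gt0 V_le.
set u := t.*2 * y.+1 - (sigma - t * (2 * p * t + 1)).
have u_le : u <= t.*2 by lia.
have y_lt' : y + t.*2 * p < (t.*2 + d) * p by nia.
exists (half_array p t.*2 y u); split.
- exact: half_array_range.
- exact: half_array_inj.
- by move=> j j_lt; have := sum_half_array y u_le j_lt; lia.
Qed.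

Lemma sum_complement k S (F : 'I_k -> nat) :
  (forall i, F i <= S) -> \sum_i (S - F i) + \sum_i F i = k * S.
Proof.
move=> F_le; rewrite -big_split /= (eq_bigr (fun=> S)) ?sum_nat_const ?card_ord // => i _.
exact: subnK.
Qed.

(* Rows of the MCR, in order: the top block is rows [0, w) of K complemented,
   then rows [w, w+f) of K, then the same rows complemented; the bottom block is
   rows [0, w) of K, then rows [w+f, h) of K, then the same rows complemented. *)
Section Doubling.

Variables (p w f g q : nat) (K : nat -> nat -> nat).
Let h := w + f + g.
Let S := (h * p).*2.+1.
Hypothesis K_top : top_balanced h p w (q * S) K.
Hypothesis balance : w + f = q.*2 + g.
Let m := w + f + f.
Let n := w + g + g.

Definition half_row i :=
  if i < w + f then i else if i < m then i - f
  else if i < m + w then i - m else if i < m + w + g then i - m + f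
  else i - m - g + f.

Definition flipped i := [|| i < w, w + f <= i < m | m + w + g <= i].

Definition doubled i j := if flipped i then S - K (half_row i) j else K (half_row i) j.

Lemma half_row_lt i : i < m + n -> half_row i < h.
Proof. by rewrite /half_row /h /m /n; repeat case: ifP; lia. Qed.

Lemma layout_inj i1 i2 : i1 < m + n -> i2 < m + n ->
  half_row i1 = half_row i2 -> flipped i1 = flipped i2 -> i1 = i2.
Proof. by rewrite /half_row /flipped /m /n; repeat case: ifP; lia. Qed.

Lemma K_le_S r j : r < h -> j < p -> K r j <= S.
Proof. by case: K_top => K_range _ _ r_lt j_lt; have := K_range r j r_lt j_lt; rewrite /S; lia. Qed.

Lemma doubled_range i j : i < m + n -> j < p -> 0 < doubled i j <= (m + n) * p.
Proof.
case: K_top => K_range _ _ i_lt j_lt; have := K_range _ _ (half_row_lt i_lt) j_lt.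
by rewrite /doubled /S /h /m /n; case: flipped; nia.
Qed.

Lemma doubled_inj i1 j1 i2 j2 : i1 < m + n -> i2 < m + n -> j1 < p -> j2 < p ->
  doubled i1 j1 = doubled i2 j2 -> i1 = i2 /\ j1 = j2.
Proof.
case: K_top => K_range K_inj _ i1_lt i2_lt j1_lt j2_lt.
have r1_lt := half_row_lt i1_lt; have r2_lt := half_row_lt i2_lt.
have := K_range _ _ r1_lt j1_lt; have := K_range _ _ r2_lt j2_lt.
move=> K2_range K1_range E.
have [flip_eq K_eq] : flipped i1 = flipped i2 /\ K (half_row i1) j1 = K (half_row i2) j2.
  by move: E; rewrite /doubled /S; do 2 case: flipped; lia.
have [r_eq j_eq] := K_inj _ _ _ _ r1_lt r2_lt j1_lt j2_lt K_eq.
by split => //; apply: layout_inj.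
Qed.

Lemma doubled_at i j r b : half_row i = r -> flipped i = b ->
  doubled i j = if b then S - K r j else K r j.
Proof. by rewrite /doubled => -> ->. Qed.

Ltac layout := rewrite /half_row /flipped /m; repeat case: ifP; lia.

Lemma top_column_sum j : j < p -> \sum_(i < m) doubled i j = (q + g) * S.
Proof.
case: K_top => _ _ K_sum j_lt; rewrite !big_split_ord /=.
have -> : \sum_(i < w) doubled i j = \sum_(i < w) (S - K i j).
  by apply: eq_bigr => i _; have i_lt := ltn_ord i; apply: (doubled_at j (b := true)); layout.
have -> : \sum_(i < f) doubled (w + i) j = \sum_(i < f) K (w + i) j.
  by apply: eq_bigr => i _; have i_lt := ltn_ord i; apply: (doubled_at j (b := false)); layout.
have -> : \sum_(i < f) doubled (w + f + i) j = \sum_(i < f) (S - K (w + i) j).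
  by apply: eq_bigr => i _; have i_lt := ltn_ord i; apply: (doubled_at j (b := true)); layout.
have : \sum_(i < w) (S - K i j) + \sum_(i < w) K i j = w * S.
  by apply: sum_complement => i; apply: K_le_S => //; have := ltn_ord i; rewrite /h; lia.
have : \sum_(i < f) (S - K (w + i) j) + \sum_(i < f) K (w + i) j = f * S.
  by apply: sum_complement => i; apply: K_le_S => //; have := ltn_ord i; rewrite /h; lia.
rewrite K_sum //; lia.
Qed.

Lemma bottom_column_sum j : j < p -> \sum_(i < n) doubled (m + i) j = (q + g) * S.
Proof.
case: K_top => _ _ K_sum j_lt; rewrite !big_split_ord /=.
have -> : \sum_(i < w) doubled (m + i) j = \sum_(i < w) K i j.
  by apply: eq_bigr => i _; have i_lt := ltn_ord i; apply: (doubled_at j (b := false)); layout.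
have -> : \sum_(i < g) doubled (m + (w + i)) j = \sum_(i < g) K (w + f + i) j.
  by apply: eq_bigr => i _; have i_lt := ltn_ord i; apply: (doubled_at j (b := false)); layout.
have -> : \sum_(i < g) doubled (m + (w + g + i)) j = \sum_(i < g) (S - K (w + f + i) j).
  by apply: eq_bigr => i _; have i_lt := ltn_ord i; apply: (doubled_at j (b := true)); layout.
have : \sum_(i < g) (S - K (w + f + i) j) + \sum_(i < g) K (w + f + i) j = g * S.
  by apply: sum_complement => i; apply: K_le_S => //; have := ltn_ord i; rewrite /h; lia.
rewrite K_sum //; lia.
Qed.

Lemma doubling_MCR : MCR_exists m n p.
Proof.
exists (\matrix_(i, j) doubled i j)%R; split; [|split].
- by move=> i j; rewrite mxE; apply: doubled_range.
- move=> i1 j1 i2 j2; rewrite !mxE => /doubled_inj[] // i_eq j_eq.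
  by split; apply: val_inj.
- exists ((q + g) * S) => j; split.
  + by rewrite -(top_column_sum (ltn_ord j)); apply: eq_bigr => i _; rewrite mxE.
  + by rewrite -(bottom_column_sum (ltn_ord j)); apply: eq_bigr => i _; rewrite mxE.
Qed.

End Doubling.

Lemma threshold_exists p a b : 0 < p -> 4 * p * a ^ 2 + a <= 2 * p * b ^ 2 ->
  let S := 4 * p * (a + b) + 1 in
  exists t, [/\ a <= t <= b, 2 * p * t ^ 2 <= a * S & t * (2 * p * t + 1) + a * S <= t * S].
Proof.
move=> p_gt0 hyp S.
have a_le_b : a <= b.
  case: leqP => // b_lt_a; have : b ^ 2 <= a ^ 2 by rewrite leq_exp2r // ltnW.
  by move/(leq_mul (leqnn (2 * p))); lia.
pose P t := (t <= b) && (2 * p * t ^ 2 <= a * S).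
have Pa : P a by rewrite /P a_le_b /S; nia.
have P_le_b t : P t -> t <= b by case/andP.
case: (ex_maxnP (ex_intro P a Pa) P_le_b) => t /andP[t_le_b t_low] t_max.
exists t; split => //; first by rewrite t_le_b t_max.
have [t_eq_b | t_lt_b] := eqVneq t b; first by rewrite /S t_eq_b; nia.
have t_high : a * S < 2 * p * t.+1 ^ 2.
  by rewrite ltnNge; apply: contraT => /negPn low; have := t_max _ (_ : P t.+1); rewrite /P low; lia.
have [a0 | a_gt0] := posnP a; first by move: t_low; rewrite a0 /S; nia.
have a_le_t : a <= t by exact: t_max.
by rewrite /S in t_high *; nia.
Qed.

Lemma MCR_sufficient p a b : 0 < p -> 0 < b -> 4 * p * a ^ 2 + a <= 2 * p * b ^ 2 ->
  MCR_exists b.*2 (b.*2 + a * 4) p.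
Proof.
move=> p_gt0 b_gt0 hyp.
have [t [/andP[a_le_t t_le_b] t_low t_high]] := threshold_exists p_gt0 hyp.
have [q t_eq] : exists q, t = a + q by exists (t - a); lia.
have [f b_eq] : exists f, b = t + f by exists (b - t); lia.
pose g := f + a.*2.
have [K K_top] : exists K, top_balanced (t.*2 + (f + g)) p t.*2 (q * ((t.*2 + (f + g)) * p).*2.+1) K.
  apply: top_balanced_exists => //.
    rewrite /g; have [a0 | a_gt0] := posnP a; last by lia.
    by move: t_low; rewrite a0 mul0n; nia.
  have -> : ((t.*2 + (f + g)) * p).*2.+1 = 4 * p * (a + b) + 1 by rewrite /g b_eq; nia.
  have tS : t * (4 * p * (a + b) + 1) = a * (4 * p * (a + b) + 1) + q * (4 * p * (a + b) + 1).
    by rewrite t_eq mulnDl.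
  have : t * (4 * p * (a + b) + 1) = 4 * p * t ^ 2 + t.*2 * (p * (f + g)) + t.
    by rewrite /g b_eq; nia.
  lia.
rewrite addnA in K_top.
have -> : b.*2 + a * 4 = t.*2 + g + g by rewrite /g; lia.
have -> : b.*2 = t.*2 + f + f by lia.
by apply: doubling_MCR K_top _; rewrite /g; lia.
Qed.

Lemma pell_cond_iff m n p :
  pell_cond m n p <-> 2 * (2 * p * n + 1) ^ 2 = (2 * p * m + 2 * p * n + 1) ^ 2 + 1.
Proof.
rewrite /pell_cond; move: (2 * p * n + 1) (2 * p * m + 2 * p * n + 1) => X Y.
by rewrite !expnS expn0 !muln1; split=> E; lia.
Qed.

Section RealCondition.
Local Open Scope R_scope.

Lemma sqrt2_mul_le_iff (x y : R) : 0 <= x -> 0 <= y -> (sqrt 2 * x <= y <-> 2 * (x * x) <= y * y).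
Proof.
move=> x_ge0 y_ge0; have sqrt2_sq := sqrt_sqrt 2 ltac:(lra); have := sqrt_pos 2.
split=> [le_y | le_sq].
  have : 0 <= sqrt 2 * x by nra.
  nra.
by apply: Rnot_lt_le => lt_y; nra.
Qed.

Lemma sqrt_cond_iff m n p : (0 < p)%N ->
  sqrt_cond m n p <-> (2 * (2 * p * n + 1) ^ 2 <= (2 * p * m + 2 * p * n + 1) ^ 2)%N.
Proof.
move=> p_gt0; rewrite /sqrt_cond.
have p_pos : 0 < INR p by apply: lt_0_INR; apply/ltP.
have n_ge0 := pos_INR n; have m_ge0 := pos_INR m.
have nat_le_iff (a b : nat) : (a <= b)%N <-> INR a <= INR b.
  by split=> [/leP/le_INR | /INR_le/leP].
have scale_le_iff (a b : R) : a <= b <-> a * (2 * INR p) <= b * (2 * INR p).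
  by split=> le_ab; [apply: Rmult_le_compat_r | apply: Rmult_le_reg_r le_ab]; lra.
rewrite nat_le_iff !expnS expn0 !muln1 !mult_INR -sqrt2_mul_le_iff; try exact: pos_INR.
rewrite scale_le_iff !plus_INR !mult_INR (_ : INR 2 = 2); last by rewrite /=; lra.
have -> : ((sqrt 2 - 1) * INR n + (sqrt 2 - 1) / (2 * INR p)) * (2 * INR p) =
          (sqrt 2 - 1) * (2 * INR p * INR n + 1) by field; lra.
by change (INR 1) with 1; split=> ?; nra.
Qed.

End RealCondition.

Lemma pell_or_sqrt_cond_iff m n p : 0 < p ->
  pell_cond m n p \/ sqrt_cond m n p <-> 2 * n * (n * p + 1) <= (m + n) * ((m + n) * p + 1).
Proof.
move=> p_gt0; rewrite pell_cond_iff sqrt_cond_iff //.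
have lhs : 2 * (2 * p * n + 1) ^ 2 = 4 * p * (2 * n * (n * p + 1)) + 2 by nia.
have rhs : (2 * p * m + 2 * p * n + 1) ^ 2 + 1 = 4 * p * ((m + n) * ((m + n) * p + 1)) + 2 by nia.
rewrite -[X in _ <-> is_true X](leq_pmul2l (_ : 0 < 4 * p)) ?muln_gt0 //; lia.
Qed.

Theorem theorem8 (m n p : nat) :
  (0 < m)%N -> (0 < n)%N -> ~~ odd m -> ~~ odd n -> (m <= n)%N -> (0 < p)%N ->
  (MCR_exists m n p <->
     ((m + n) %% 4 = 0)%N /\ (pell_cond m n p \/ sqrt_cond m n p)).
Proof.
move=> m_gt0 _ m_even n_even m_le_n p_gt0; rewrite pell_or_sqrt_cond_iff //.
split=> [/(MCR_necessary p_gt0 m_even n_even)[/eqP] // | [/eqP dvd4 bound]].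
have /dvdnP[b m_eq] : 2 %| m by rewrite dvdn2.
have /dvdnP[k sum_eq] := dvd4.
have {}m_eq : m = b.*2 by lia.
have n_eq : n = b.*2 + (k - b) * 4 by lia.
rewrite m_eq n_eq in m_gt0 bound *.
by apply: MCR_sufficient => //; [lia | nia].
Qed.
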